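(* Let $\alpha:\mathbb{Z}\curvearrowright X$ be a minimal continuous action on a compact Hausdorff space $X$, let $K$ be a topological group and $K_0\subset K$ a closed subgroup. Let $c:\mathbb{Z}\times X\to K_0$ be a continuous cocycle such that $c(n,x)=f(\alpha_n(x))f(x)^{-1}$ for all $n\in\mathbb{Z}$, $x\in X$, for some continuous map $f:X\to K$. Then there is a continuous map $f':X\to K_0$ such that $c(n,x)=f'(\alpha_n(x))f'(x)^{-1}$ for all $n\in\mathbb{Z}$ and $x\in X$.
   Context: A continuous map $c:G\times X\to K$ for an action $G\curvearrowright X$ is a cocycle if $c(g_1g_2,x)=c(g_1,g_2x)c(g_2,x)$ for all $g_1,g_2\in G$, $x\in X$. *)

From HB Require Import structures.
From mathcomp Require Import all_boot all_order all_algebra.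
From mathcomp Require Import all_classical all_reals all_analysis.
Set Implicit Arguments. Unset Strict Implicit. Unset Printing Implicit Defensive.
Import Order.TTheory GRing.Theory Num.Theory.
Local Open Scope classical_set_scope.

Definition is_topological_group (K : topologicalType)
  (mul : K -> K -> K) (inv : K -> K) (e : K) : Prop :=
  [/\ (forall a b c, mul a (mul b c) = mul (mul a b) c),
      (forall a, mul e a = a /\ mul a e = a),
      (forall a, mul (inv a) a = e /\ mul a (inv a) = e),
      continuous (fun p : K * K => mul p.1 p.2) &
      continuous inv].

Definition is_closed_subgroup (K : topologicalType)
  (mul : K -> K -> K) (inv : K -> K) (e : K) (K0 : set K) : Prop :=
  [/\ closed K0, K0 e,
      (forall a b, K0 a -> K0 b -> K0 (mul a b)) &
      (forall a, K0 a -> K0 (inv a))].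

Definition is_Z_action (X : topologicalType) (alpha : int -> X -> X) : Prop :=
  [/\ (forall x, alpha 0%R x = x),
      (forall m n x, alpha (m + n)%R x = alpha m (alpha n x)) &
      (forall n, continuous (alpha n))].

Definition minimal_Z_action (X : topologicalType) (alpha : int -> X -> X) : Prop :=
  forall x : X, closure [set alpha n x | n in [set: int]] = [set: X].

Definition is_cocycle (X K : Type) (mul : K -> K -> K)
  (alpha : int -> X -> X) (c : int -> X -> K) : Prop :=
  forall m n x, c (m + n)%R x = mul (c m (alpha n x)) (c n x).

From HB Require Import structures.
From mathcomp Require Import all_boot all_order all_algebra.
From mathcomp Require Import all_classical all_reals all_analysis.
Set Implicit Arguments. Unset Strict Implicit. Unset Printing Implicit Defensive.
Local Open Scope classical_set_scope.

(* A coboundary does not change when the transfer function f is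
   translated on the right by a constant: (f k)(αₙx)·((f k)(x))⁻¹ = f(αₙx)·f(x)⁻¹.
   Fix a point x₀ and put g := f · f(x₀)⁻¹.  Then g still produces the cocycle c,
   and along the orbit of x₀ we get g(αₙx₀) = c(n, x₀) ∈ K₀.  The set g⁻¹(K₀) is
   closed (g is continuous, K₀ is closed) and contains the orbit of x₀, which is
   dense by minimality; hence g takes all its values in K₀.  If X is empty the
   constant map e does the job. *)

Section GroupAlgebra.
Variables (K : Type) (mul : K -> K -> K) (inv : K -> K) (e : K).
Hypothesis mulA : forall a b c, mul a (mul b c) = mul (mul a b) c.
Hypothesis mul1 : forall a, mul e a = a /\ mul a e = a.
Hypothesis mulV : forall a, mul (inv a) a = e /\ mul a (inv a) = e.

Lemma inv_unique a b : mul a b = e -> b = inv a.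
Proof.
move=> ab_e.
by rewrite -(proj1 (mul1 b)) -(proj1 (mulV a)) -mulA ab_e (proj2 (mul1 _)).
Qed.

Lemma invM a b : inv (mul a b) = mul (inv b) (inv a).
Proof.
apply/esym/inv_unique.
by rewrite -mulA (mulA b) (proj2 (mulV b)) (proj1 (mul1 _)) (proj2 (mulV a)).
Qed.

(* The quotient a·b⁻¹ is invariant under a common right translation; this is
   why right translates of f define the same coboundary. *)
Lemma mul_inv_rtranslate a b k :
  mul (mul a k) (inv (mul b k)) = mul a (inv b).
Proof.
by rewrite invM -mulA (mulA k) (proj2 (mulV k)) (proj1 (mul1 _)).
Qed.

End GroupAlgebra.

Lemma continuous_rtranslate (X K : topologicalType) (mul : K -> K -> K)
    (f : X -> K) (k : K) :
  continuous (fun p : K * K => mul p.1 p.2) -> continuous f ->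
  continuous (fun y => mul (f y) k).
Proof.
move=> mul_cont f_cont y.
apply: (continuous_comp (f := fun y => (f y, k))
                        (g := fun p : K * K => mul p.1 p.2)); last exact: mul_cont.
by apply: cvg_pair; [exact: f_cont | exact: cvg_cst].
Qed.

Lemma minimal_closed_orbit_full (X : topologicalType) (alpha : int -> X -> X)
    (S : set X) (x : X) :
  minimal_Z_action alpha -> closed S ->
  (forall n, S (alpha n x)) -> forall y, S y.
Proof.
move=> minimal S_closed orbit_in_S y.
have orbit_sub : [set alpha n x | n in [set: int]] `<=` S.
  by move=> _ [n _ <-]; exact: orbit_in_S.
have : closure [set alpha n x | n in [set: int]] y by rewrite minimal.
by move/(closureS orbit_sub); rewrite -(proj1 (closure_id _) S_closed).
Qed.

Theorem lemma2p3 (X K : topologicalType) (alpha : int -> X -> X)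
  (mul : K -> K -> K) (inv : K -> K) (e : K) (K0 : set K)
  (c : int -> X -> K) (f : X -> K) :
  compact [set: X] -> hausdorff_space X ->
  is_Z_action alpha -> minimal_Z_action alpha ->
  is_topological_group mul inv e ->
  is_closed_subgroup mul inv e K0 ->
  (forall n x, K0 (c n x)) -> (forall n, continuous (c n)) ->
  is_cocycle mul alpha c ->
  continuous f ->
  (forall n x, c n x = mul (f (alpha n x)) (inv (f x))) ->
  exists f' : X -> K, continuous f' /\ (forall x, K0 (f' x)) /\
    (forall n x, c n x = mul (f' (alpha n x)) (inv (f' x))).
Proof.
move=> _ _ _ minimal [mulA mul1 mulV mul_cont _] [K0_closed _ _ _] cK0 _ _
  f_cont c_cobound.
have [[x0 _] | X_empty] := pselect (exists x : X, True); last first.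
  exists (fun _ => e); split; first exact: cst_continuous.
  by split=> [x | n x]; exfalso; apply: X_empty; exists x.
pose g y := mul (f y) (inv (f x0)).
have g_cont : continuous g by exact: continuous_rtranslate.
have g_cobound n x : c n x = mul (g (alpha n x)) (inv (g x)).
  by rewrite c_cobound /g (mul_inv_rtranslate mulA mul1 mulV).
exists g; split => //; split => // y.
apply: (minimal_closed_orbit_full (S := g @^-1` K0) (x := x0) minimal).
- by apply: preimage_closed => // z _; exact: g_cont.
- (* along the orbit of x0, g is literally the cocycle: g (αₙ x0) = c n x0 *)
  by move=> n; rewrite /preimage /= /g -c_cobound.
Qed.
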